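(* Let $M=\mathbb{R}^{1,1}$ be the two-dimensional Minkowski plane with canonical coordinates $(x^0,x^1)$, light-cone coordinates $u=x^0+x^1$, $v=x^0-x^1$, and causal order $x\le_M y$ iff $u(x)\le u(y)$ and $v(x)\le v(y)$. Let $\tilde{\mathcal{A}}_M$ be the linear span of smooth bounded real functions on $M$ with bounded derivatives which are causal (non-decreasing for $\le_M$), and $\tilde{\mathcal{A}}=\tilde{\mathcal{A}}_M\otimes M_2(\mathbb{C})$. Fix real numbers $d_1,d_2$ and $D_F=\mathrm{diag}(d_1,d_2)$. Let $\mathcal{C}$ be the set of self-adjoint $\alpha\in\tilde{\mathcal{A}}$ (smooth functions $M\to M_2(\mathbb{C})$ with Hermitian values) such that at every point of $M$ the $4\times 4$ Hermitian matrix $$\begin{pmatrix}2\partial_u\alpha & [D_F,\alpha]\\ -[D_F,\alpha] & 2\partial_v\alpha\end{pmatrix}$$ is positive semidefinite. Then for all $x,y\in M$: $$x\le_M y\iff \alpha(x)\le\alpha(y)\text{ (as Hermitian matrices) for all }\alpha\in\mathcal{C}.$$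
   Context: The displayed positivity condition is the pointwise form of the condition $j[D,\alpha]\le 0$ for the product Lorentzian spectral triple with $D=D_M\otimes 1+\gamma^0\gamma^1\otimes D_F$, $D_M=-i\gamma^\mu\partial_\mu$, $j=i\gamma^0\otimes 1$, $\gamma_0=\begin{pmatrix}0&i\\ i&0\end{pmatrix}$, $\gamma_1=\begin{pmatrix}0&-i\\ i&0\end{pmatrix}$; $\mathcal{C}$ is the resulting causal cone. For Hermitian matrices, $A\le B$ means $B-A$ is positive semidefinite. *)

From HB Require Import structures.
From mathcomp Require Import all_boot all_order all_algebra.
From mathcomp Require Import all_classical all_reals all_analysis.
From mathcomp Require Import complex.

Set Implicit Arguments.
Unset Strict Implicit.
Unset Printing Implicit Defensive.

Import Order.TTheory GRing.Theory Num.Theory.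
Import numFieldNormedType.Exports.
Local Open Scope ring_scope.

Section Defs.
Variable R : realType.

Notation M := 'rV[R]_2.

Definition x0 (x : M) : R := x 0 0.
Definition x1 (x : M) : R := x 0 1.
Definition lc_u (x : M) : R := x0 x + x1 x.
Definition lc_v (x : M) : R := x0 x - x1 x.

Definition causal_le (x y : M) : Prop := lc_u x <= lc_u y /\ lc_v x <= lc_v y.

Definition partial (i : 'I_2) (f : M -> R) : M -> R :=
  fun x => 'D_(delta_mx 0 i) f x.

Definition iter_partial (ds : seq 'I_2) (f : M -> R) : M -> R :=
  foldr partial f ds.

Definition smooth (f : M -> R) : Prop :=
  forall (ds : seq 'I_2) (x : M), differentiable (iter_partial ds f) x.

Definition bounded_all_derivs (f : M -> R) : Prop :=
  forall ds : seq 'I_2, exists C : R, forall x : M, `|iter_partial ds f x| <= C.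

Definition causal_fun (f : M -> R) : Prop :=
  forall x y : M, causal_le x y -> f x <= f y.

Definition causal_generator (f : M -> R) : Prop :=
  [/\ smooth f, bounded_all_derivs f & causal_fun f].

(* alpha lies in tilde A = tilde A_M (x) M_2(C): a finite sum of
   (causal generator) (x) (complex 2x2 matrix) *)
Definition in_Atilde (alpha : M -> 'M[R[i]]_2) : Prop :=
  exists (n : nat) (f : 'I_n -> M -> R) (m : 'I_n -> 'M[R[i]]_2),
    (forall k, causal_generator (f k)) /\
    (forall x, alpha x = \sum_(k < n) ((f k x)%:C)%C *: m k).

Definition adjmx n (A : 'M[R[i]]_n) : 'M[R[i]]_n := (map_mx Num.conj A)^T.
Definition hermmx n (A : 'M[R[i]]_n) : Prop := adjmx A = A.
Definition psdmx n (A : 'M[R[i]]_n) : Prop :=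
  hermmx A /\
  forall v : 'cV[R[i]]_n, 0 <= ((map_mx Num.conj v)^T *m A *m v) 0 0.
Definition lemx n (A B : 'M[R[i]]_n) : Prop := psdmx (B - A).

Definition selfadj (alpha : M -> 'M[R[i]]_2) : Prop :=
  forall x, hermmx (alpha x).

Definition dmx (w : M) (alpha : M -> 'M[R[i]]_2) (x : M) : 'M[R[i]]_2 :=
  \matrix_(a, b) (('D_w (fun y => complex.Re (alpha y a b)) x) +i*
                  ('D_w (fun y => complex.Im (alpha y a b)) x))%C.

(* the coordinate vector fields d/du = (d_0 + d_1)/2, d/dv = (d_0 - d_1)/2 *)
Definition dir_u : M := \row_(j < 2) (2%:R^-1 : R).
Definition dir_v : M := \row_(j < 2) (if j == 0 then 2%:R^-1 else - 2%:R^-1 : R).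

Definition d_u alpha x := dmx dir_u alpha x.
Definition d_v alpha x := dmx dir_v alpha x.

Definition DF (d1 d2 : R) : 'M[R[i]]_2 :=
  diag_mx (\row_(j < 2) ((if j == 0 then d1 else d2)%:C)%C).

Definition commDF (d1 d2 : R) (A : 'M[R[i]]_2) : 'M[R[i]]_2 :=
  DF d1 d2 *m A - A *m DF d1 d2.

Definition causal_block (d1 d2 : R) (alpha : M -> 'M[R[i]]_2) (x : M)
  : 'M[R[i]]_(2 + 2) :=
  block_mx (2%:R *: d_u alpha x) (commDF d1 d2 (alpha x))
           (- commDF d1 d2 (alpha x)) (2%:R *: d_v alpha x).

Definition causal_cone (d1 d2 : R) (alpha : M -> 'M[R[i]]_2) : Prop :=
  [/\ in_Atilde alpha, selfadj alpha &
      forall x, psdmx (causal_block d1 d2 alpha x)].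

End Defs.

From HB Require Import structures.
From mathcomp Require Import all_boot all_order all_algebra.
From mathcomp Require Import all_classical all_reals all_analysis.
From mathcomp Require Import complex.
From mathcomp Require Import ring lra.

(* If alpha lies in the cone then, for every vector v, the real function
   z |-> Re (v^* alpha(z) v) has nonnegative derivatives along d/du and d/dv
   (these are the quadratic forms of the diagonal blocks of the positivity
   matrix), hence is nondecreasing for <=_M; hermiticity makes
   v^* (alpha y - alpha x) v real, so alpha x <= alpha y.
   Conversely, if u(y) < u(x) (resp. v(y) < v(x)), the scalar element
   sigma(u) 1, with sigma the logistic function, lies in the cone: it commutes
   with D_F, so the off-diagonal blocks vanish, and since
   sigma' = sigma (1 - sigma) all its derivatives are polynomials in sigma,
   hence bounded.  It separates x from y. *)

Set Implicit Arguments.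
Unset Strict Implicit.
Unset Printing Implicit Defensive.

Import Order.TTheory GRing.Theory Num.Theory.
Import numFieldNormedType.Exports.
Local Open Scope ring_scope.

Section directional_monotonicity.
Variable R : realType.

Lemma derive_comp_affine (U V W : normedModType R) (g : V -> W) (A : U -> V)
    (x w : U) (w' : V) :
  (forall e : R, A (e *: w + x) = e *: w' + A x) ->
  (derivable (g \o A) x w <-> derivable g (A x) w') /\
  'D_w (g \o A) x = 'D_w' g (A x).
Proof.
move=> HA.
have E : (fun h : R => h^-1 *: (((g \o A) \o shift x) (h *: w) - (g \o A) x)) =
    (fun h => h^-1 *: ((g \o shift (A x)) (h *: w') - g (A x))).
  by apply/funext => h /=; rewrite HA.
by rewrite /derivable /derive E.
Qed.

Lemma derive_ge0_ndecr_dir (V : normedModType R) (g : V -> R) (w z : V) :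
  (forall p, derivable g p w) -> (forall p, 0 <= 'D_w g p) ->
  forall a, 0 <= a -> g z <= g (a *: w + z).
Proof.
move=> dg Dg_ge0 a a_ge0.
pose A t : V := t *: w + z.
have HA t (e : R) : A (e *: 1 + t) = e *: w + A t.
  by rewrite /A -[e *: 1]/(e * 1) mulr1 scalerDl addrA.
have dgA t : derivable (g \o A) t 1 /\ derive1 (g \o A) t = 'D_w g (A t).
  have [dE DE] := derive_comp_affine g (HA t).
  by split; [apply/dE; apply: dg | rewrite derive1E DE].
have := @ger0_derive1_ndecr R (g \o A) 0 a _ _ _ 0 a (lexx _) a_ge0 (lexx _).
rewrite /= /A scale0r add0r; apply.
- by move=> t _; case: (dgA t).
- by move=> t _; case: (dgA t) => _ ->.
- by apply: derivable_within_continuous => t _; case: (dgA t).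
Qed.

End directional_monotonicity.

Section light_cone.
Variable R : realType.
Local Notation M := 'rV[R]_2.

Lemma lc_decomp (x y : M) :
  y = (lc_v y - lc_v x) *: dir_v R + ((lc_u y - lc_u x) *: dir_u R + x).
Proof.
apply/rowP => j; rewrite !mxE /lc_u /lc_v /x0 /x1.
have [->|->] : j = 0 \/ j = 1.
  by case: j => [[|[|k]]] Hj; [left|right|by []]; apply: val_inj.
all: by rewrite /=; lra.
Qed.

Lemma derive_uv_ge0_causal (g : M -> R) :
  (forall p, derivable g p (dir_u R)) -> (forall p, derivable g p (dir_v R)) ->
  (forall p, 0 <= 'D_(dir_u R) g p) -> (forall p, 0 <= 'D_(dir_v R) g p) ->
  causal_fun g.
Proof.
move=> du dv Du_ge0 Dv_ge0 x y [hu hv].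
rewrite [in X in _ <= X](lc_decomp x y).
apply: le_trans (derive_ge0_ndecr_dir x du Du_ge0 _) (derive_ge0_ndecr_dir _ dv Dv_ge0 _).
all: by rewrite subr_ge0.
Qed.

Lemma lc_u_affine (e : R) (w x : M) : lc_u (e *: w + x) = e *: lc_u w + lc_u x.
Proof. rewrite /lc_u /x0 /x1 !mxE -[e *: _]/(e * _); ring. Qed.

Lemma lc_v_affine (e : R) (w x : M) : lc_v (e *: w + x) = e *: lc_v w + lc_v x.
Proof. rewrite /lc_v /x0 /x1 !mxE -[e *: _]/(e * _); ring. Qed.

Lemma differentiable_lc_u (x : M) : differentiable (@lc_u R) x.
Proof.
exact: differentiableD (differentiable_coord x 0 0) (differentiable_coord x 0 1).
Qed.

Lemma differentiable_lc_v (x : M) : differentiable (@lc_v R) x.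
Proof.
exact: differentiableB (differentiable_coord x 0 0) (differentiable_coord x 0 1).
Qed.

Lemma causal_lc_u : causal_fun (@lc_u R).
Proof. by move=> x y []. Qed.

Lemma causal_lc_v : causal_fun (@lc_v R).
Proof. by move=> x y []. Qed.

Lemma lc_u_dir_u : lc_u (dir_u R) = 1.
Proof. by rewrite /lc_u /x0 /x1 !mxE; lra. Qed.

Lemma lc_v_dir_v : lc_v (dir_v R) = 1.
Proof. by rewrite /lc_v /x0 /x1 !mxE /=; lra. Qed.

Lemma lc_u_dir_v : lc_u (dir_v R) = 0.
Proof. by rewrite /lc_u /x0 /x1 !mxE /=; lra. Qed.

Lemma lc_v_dir_u : lc_v (dir_u R) = 0.
Proof. by rewrite /lc_v /x0 /x1 !mxE; lra. Qed.

End light_cone.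

Section quadratic_form.
Variable R : realType.
Local Notation C := R[i].
Local Notation adjv v := ((map_mx Num.conj v)^T).

Definition qform n (v : 'cV[C]_n) (A : 'M[C]_n) : C := (adjv v *m A *m v) 0 0.

Lemma qformB n (v : 'cV[C]_n) (A B : 'M[C]_n) :
  qform v (A - B) = qform v A - qform v B.
Proof. by rewrite /qform mulmxBr mulmxBl !mxE. Qed.

Lemma qformZ n (v : 'cV[C]_n) (a : C) (A : 'M[C]_n) :
  qform v (a *: A) = a * qform v A.
Proof. by rewrite /qform -scalemxAr -scalemxAl mxE. Qed.

Lemma qform_sum n m (v : 'cV[C]_n) (r : 'I_m -> C) (A : 'I_m -> 'M[C]_n) :
  qform v (\sum_k r k *: A k) = \sum_k r k * qform v (A k).
Proof.
rewrite /qform mulmx_sumr mulmx_suml summxE; apply: eq_bigr => k _.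
by rewrite -qformZ.
Qed.

Lemma qform1_ge0 n (v : 'cV[C]_n) : 0 <= qform v 1%:M.
Proof.
rewrite /qform mulmx1 !mxE; apply: sumr_ge0 => j _.
by rewrite !mxE mulrC mul_conjC_ge0.
Qed.

Lemma qform_col_mx0 (A B D E : 'M[C]_2) (v : 'cV[C]_2) :
  qform (col_mx v 0) (block_mx A B D E) = qform v A.
Proof.
rewrite /qform map_col_mx tr_col_mx map_mx0 trmx0 mul_row_block mul_row_col.
by rewrite !mul0mx !addr0 mulmx0 addr0.
Qed.

Lemma qform_col_0mx (A B D E : 'M[C]_2) (v : 'cV[C]_2) :
  qform (col_mx 0 v) (block_mx A B D E) = qform v E.
Proof.
rewrite /qform map_col_mx tr_col_mx map_mx0 trmx0 mul_row_block mul_row_col.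
by rewrite !mul0mx !add0r mulmx0 add0r.
Qed.

Lemma hermmx_qform_real n (v : 'cV[C]_n) (A : 'M[C]_n) :
  hermmx A -> complex.Im (qform v A) = 0.
Proof.
move=> hA.
have : Num.conj (qform v A) = qform v A.
  have E : (map_mx Num.conj (adjv v *m A *m v))^T = adjv v *m A *m v.
    rewrite !map_mxM !trmx_mul map_trmx map_mxCK trmxK mulmxA.
    by rewrite -/(adjmx A) hA.
  by rewrite /qform -[in RHS]E !mxE.
case: (qform v A) => a b /eqP; rewrite eq_complex /= => /andP[_ /eqP hb].
lra.
Qed.

Lemma hermmx_qform_ge0 n (v : 'cV[C]_n) (A : 'M[C]_n) :
  hermmx A -> 0 <= complex.Re (qform v A) -> 0 <= qform v A.
Proof. by move=> hA Re_ge0; rewrite lecE hermmx_qform_real // eqxx. Qed.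

Lemma hermmxB n (A B : 'M[C]_n) : hermmx A -> hermmx B -> hermmx (A - B).
Proof. by move=> hA hB; rewrite /hermmx /adjmx map_mxB linearB /= -!/(adjmx _) hA hB. Qed.

Lemma psdmx_block_ul (A B D E : 'M[C]_2) (v : 'cV[C]_2) :
  psdmx (block_mx A B D E) -> 0 <= qform v A.
Proof. by case=> _ /(_ (col_mx v 0)); rewrite -/(qform _ _) qform_col_mx0. Qed.

Lemma psdmx_block_dr (A B D E : 'M[C]_2) (v : 'cV[C]_2) :
  psdmx (block_mx A B D E) -> 0 <= qform v E.
Proof. by case=> _ /(_ (col_mx 0 v)); rewrite -/(qform _ _) qform_col_0mx. Qed.

Lemma psdmx_scalar n (a : C) : 0 <= a -> psdmx (a *: (1%:M : 'M[C]_n)).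
Proof.
move=> a_ge0; split; last by move=> v; rewrite -/(qform _ _) qformZ mulr_ge0 ?qform1_ge0.
have aJ : Num.conj a = a by apply: conj_Creal; apply: ger0_real.
apply/matrixP => i j; rewrite !mxE eq_sym.
by case: (i == j); rewrite /= ?mulr1 ?mulr0 ?rmorph0 ?aJ.
Qed.

Lemma psdmx_block_diag m n (A : 'M[C]_m) (E : 'M[C]_n) :
  psdmx A -> psdmx E -> psdmx (block_mx A 0 0 E).
Proof.
move=> [hA A_ge0] [hE E_ge0]; split.
  by rewrite /hermmx /adjmx map_block_mx tr_block_mx !map_mx0 !trmx0 -!/(adjmx _) hA hE.
move=> w; rewrite -(vsubmxK w) map_col_mx tr_col_mx mul_row_block mul_row_col.
rewrite !mulmx0 addr0 add0r.
by rewrite mxE addr_ge0 ?A_ge0 ?E_ge0.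
Qed.

End quadratic_form.

Section derivative_of_combinations.
Variable R : realType.
Local Notation M := 'rV[R]_2.

Lemma sum_realCM n (r : 'I_n -> R) (c : 'I_n -> R[i]) :
  \sum_k ((r k)%:C)%C * c k =
  ((\sum_k r k * complex.Re (c k)) +i* (\sum_k r k * complex.Im (c k)))%C.
Proof.
elim/big_rec3: _ => [//|k s0 s1 s2 _ ->].
by case: (c k) => a b /=; congr (_ +i* _)%C; ring.
Qed.

Lemma derivable_sum_mulr n (f : 'I_n -> M -> R) (c : 'I_n -> R) (p w : M) :
  (forall k, derivable (f k) p w) ->
  derivable (fun z => \sum_k f k z * c k) p w.
Proof.
move=> df; have -> : (fun z => \sum_k f k z * c k) = \sum_k (c k \*: f k).
  by rewrite fct_sumE; apply/funext => z; apply: eq_bigr => k _; rewrite mulrC.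
by apply: derivable_sum => k; apply: derivableZ.
Qed.

Lemma derive_sum_mulr n (f : 'I_n -> M -> R) (c : 'I_n -> R) (p w : M) :
  (forall k, derivable (f k) p w) ->
  'D_w (fun z => \sum_k f k z * c k) p = \sum_k 'D_w (f k) p * c k.
Proof.
move=> df; have -> : (fun z => \sum_k f k z * c k) = \sum_k (c k \*: f k).
  by rewrite fct_sumE; apply/funext => z; apply: eq_bigr => k _; rewrite mulrC.
rewrite derive_sum; last by move=> k; apply: derivableZ.
by apply: eq_bigr => k _; rewrite deriveZ // mulrC.
Qed.

Lemma dmx_sum n (f : 'I_n -> M -> R) (m : 'I_n -> 'M[R[i]]_2) (w z : M) :
  (forall k, derivable (f k) z w) ->
  dmx w (fun y => \sum_k ((f k y)%:C)%C *: m k) z =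
  \sum_k (('D_w (f k) z)%:C)%C *: m k.
Proof.
move=> df; apply/matrixP => a b.
have entryE y : (\sum_k ((f k y)%:C)%C *: m k) a b =
    ((\sum_k f k y * complex.Re (m k a b)) +i* (\sum_k f k y * complex.Im (m k a b)))%C.
  by rewrite summxE -sum_realCM; apply: eq_bigr => k _; rewrite mxE.
rewrite /dmx mxE (funext (fun y => congr1 (@complex.Re R) (entryE y))).
rewrite (funext (fun y => congr1 (@complex.Im R) (entryE y))) /= !derive_sum_mulr //.
by rewrite summxE -sum_realCM; apply: eq_bigr => k _; rewrite mxE.
Qed.

End derivative_of_combinations.

Lemma causal_cone_monotone (R : realType) (d1 d2 : R)
    (alpha : 'rV[R]_2 -> 'M[R[i]]_2) (x y : 'rV[R]_2) :
  causal_cone d1 d2 alpha -> causal_le x y -> lemx (alpha x) (alpha y).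
Proof.
case=> [[n [f [m [gen alphaE]]]] sa pos] hxy.
have df k p w : derivable (f k) p w.
  by case: (gen k) => sm _ _; apply: diff_derivable; exact: (sm [::] p).
have {}alphaE : alpha = fun z => \sum_k ((f k z)%:C)%C *: m k by apply/funext.
split=> [|v]; first exact: hermmxB.
apply: hermmx_qform_ge0; first exact: hermmxB.
pose g z := complex.Re (qform v (alpha z)).
have gE : g = fun z => \sum_k f k z * complex.Re (qform v (m k)).
  by apply/funext => z; rewrite /g alphaE qform_sum sum_realCM.
have dg w p : derivable g p w by rewrite gE; apply: derivable_sum_mulr.
have Dg w p : 'D_w g p = complex.Re (qform v (dmx w alpha p)).
  by rewrite gE derive_sum_mulr // alphaE dmx_sum // qform_sum sum_realCM.
have Re_qform_ge0 (A : 'M[R[i]]_2) :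
    0 <= qform v (2%:R *: A) -> 0 <= complex.Re (qform v A).
  by rewrite qformZ pmulr_rge0 ?ltr0n // lecE => /andP[].
have : g x <= g y.
  apply: derive_uv_ge0_causal hxy => // p; rewrite Dg; apply: Re_qform_ge0.
  - exact: psdmx_block_ul (pos p).
  - exact: psdmx_block_dr (pos p).
by rewrite qformB -subr_ge0 /g; case: (qform v (alpha y)) (qform v (alpha x)) => ? ? [].
Qed.

Lemma horner_bound_unit (F : realDomainType) (p : {poly F}) (s : F) :
  0 <= s <= 1 -> `|p.[s]| <= \sum_(i < size p) `|p`_i|.
Proof.
case/andP=> s_ge0 s_le1; rewrite horner_coef; apply: le_trans (ler_norm_sum _ _ _) _.
apply: ler_sum => i _; rewrite normrM normrX ler_piMr // exprn_ile1 // ger0_norm //.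
Qed.

Section logistic.
Variable R : realType.

Definition logistic (t : R) : R := (1 + expR (- t))^-1.

Let logistic_den_gt0 (t : R) : 0 < 1 + expR (- t).
Proof. by rewrite addr_gt0 // expR_gt0. Qed.

Lemma logistic_ge0 t : 0 <= logistic t.
Proof. by rewrite /logistic invr_ge0 ltW. Qed.

Lemma logistic_le1 t : logistic t <= 1.
Proof. by rewrite /logistic invf_le1 // lerDl ltW // expR_gt0. Qed.

Lemma ler_logistic : {mono logistic : a b / a <= b}.
Proof. by move=> a b; rewrite /logistic lef_pV2 ?posrE // lerD2l ler_expR lerN2. Qed.

Lemma is_derive_logistic (t : R) :
  is_derive t 1 logistic (logistic t * (1 - logistic t)).
Proof.
have dexp : is_derive t 1 (expR \o (fun s : R => - s)) (expR (- t) * -1).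
  by apply: is_derive1_comp; apply: is_deriveNid.
have dden := is_deriveD (is_derive_cst (1 : R) t 1) dexp.
have dinv := is_deriveV (f := cst 1 + (expR \o (fun s : R => - s)))
  (lt0r_neq0 (logistic_den_gt0 t)) dden.
have -> : logistic = fun s => ((cst 1 + (expR \o (fun s : R => - s))) s)^-1 by [].
apply: (is_derive_eq dinv).
change ((cst 1 + (expR \o (fun s : R => - s))) t) with (1 + expR (- t)).
have := logistic_den_gt0 t; set d := 1 + expR (- t) => d_gt0.
have -> : expR (- t) = d - 1 by rewrite /d addrC addKr.
rewrite -[_ *: _]/(_ * _); field; exact: lt0r_neq0.
Qed.

Definition logistic_dpoly (p : {poly R}) : {poly R} := p^`() * ('X * (1 - 'X)).

Lemma is_derive_poly_logistic (p : {poly R}) (t : R) :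
  is_derive t 1 (fun s => p.[logistic s]) ((logistic_dpoly p).[logistic t]).
Proof.
apply: is_derive_eq.
  exact: is_derive1_comp (is_derive_poly p (logistic t)) (is_derive_logistic t).
by rewrite /logistic_dpoly !hornerE.
Qed.

Lemma differentiable_poly_logistic (p : {poly R}) (t : R) :
  differentiable (fun s => p.[logistic s]) t.
Proof. by apply/derivable1_diffP; case: (is_derive_poly_logistic p t). Qed.

Lemma derive_poly_logistic (p : {poly R}) (k t : R) :
  'D_k (fun s => p.[logistic s]) t = k * (logistic_dpoly p).[logistic t].
Proof.
have dp := differentiable_poly_logistic p t.
rewrite deriveE // -[in LHS](mulr1 k) -[k * 1]/(k *: (1 : R)) linearZ -deriveE //.
by case: (is_derive_poly_logistic p t) => _ ->.
Qed.

End logistic.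

Section logistic_scalar.
Variable R : realType.
Local Notation M := 'rV[R]_2.
Local Notation C := R[i].

Variable L : M -> R.
Hypothesis L_affine : forall (e : R) (w x : M), L (e *: w + x) = e *: L w + L x.
Hypothesis L_diff : forall x : M, differentiable L x.

Definition poly_logisticL (p : {poly R}) (x : M) : R := p.[logistic (L x)].

Lemma derive_poly_logisticL (p : {poly R}) (w z : M) :
  'D_w (poly_logisticL p) z = L w * (logistic_dpoly p).[logistic (L z)].
Proof.
have [_ ->] := derive_comp_affine (fun s => p.[logistic s]) (fun e => L_affine e w z).
exact: derive_poly_logistic.
Qed.

Lemma differentiable_poly_logisticL (p : {poly R}) (z : M) :
  differentiable (poly_logisticL p) z.
Proof. exact: differentiable_comp (L_diff z) (differentiable_poly_logistic p (L z)). Qed.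

Lemma iter_partial_poly_logisticL ds (p : {poly R}) :
  exists q, iter_partial ds (poly_logisticL p) = poly_logisticL q.
Proof.
elim: ds => [|i ds [q IH]] /=; first by exists p.
exists (L (delta_mx 0 i) *: logistic_dpoly q); rewrite IH.
by apply/funext => x; rewrite /partial derive_poly_logisticL /poly_logisticL hornerZ.
Qed.

Lemma causal_generator_logisticL :
  causal_fun L -> causal_generator (poly_logisticL 'X).
Proof.
move=> L_causal; split.
- by move=> ds x; have [q ->] := iter_partial_poly_logisticL ds 'X;
    exact: differentiable_poly_logisticL.
- move=> ds; have [q ->] := iter_partial_poly_logisticL ds 'X.
  exists (\sum_(i < size q) `|q`_i|) => x.
  by apply: horner_bound_unit; rewrite logistic_ge0 logistic_le1.
- by move=> x y hxy; rewrite /poly_logisticL !hornerX ler_logistic L_causal.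
Qed.

Definition logistic_scalar (x : M) : 'M[C]_2 := ((poly_logisticL 'X x)%:C)%C *: 1%:M.

Lemma logistic_scalarE :
  logistic_scalar = fun x => \sum_(k < 1) ((poly_logisticL 'X x)%:C)%C *: 1%:M.
Proof. by apply/funext => x; rewrite big_ord1. Qed.

Lemma commDF_scalar (d1 d2 : R) (a : C) : commDF d1 d2 (a *: 1%:M) = 0.
Proof. by rewrite /commDF -scalemxAr -scalemxAl mulmx1 mul1mx subrr. Qed.

Lemma causal_cone_logistic_scalar (d1 d2 : R) :
  causal_fun L -> 0 <= L (dir_u R) -> 0 <= L (dir_v R) ->
  causal_cone d1 d2 logistic_scalar.
Proof.
move=> L_causal Lu_ge0 Lv_ge0; split.
- exists 1%N, (fun _ => poly_logisticL 'X), (fun _ => 1%:M); split.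
    by move=> _; exact: causal_generator_logisticL.
  by move=> x; rewrite logistic_scalarE.
- move=> x.
  have a_ge0 : 0 <= ((poly_logisticL 'X x)%:C)%C :> C.
    by rewrite ler0c /poly_logisticL hornerX logistic_ge0.
  by case: (psdmx_scalar 2 a_ge0).
move=> z.
have dE w : dmx w logistic_scalar z = (('D_w (poly_logisticL 'X) z)%:C)%C *: 1%:M.
  rewrite logistic_scalarE (@dmx_sum R 1 (fun _ => poly_logisticL 'X) (fun _ => 1%:M)).
    by rewrite big_ord1.
  by move=> _; exact/diff_derivable/differentiable_poly_logisticL.
have psdD w : 0 <= L w ->
    psdmx ((2%:R : C) *: ((('D_w (poly_logisticL 'X) z)%:C)%C *: (1%:M : 'M[C]_2))).
  move=> Lw_ge0; rewrite scalerA; apply: psdmx_scalar; rewrite mulr_ge0 ?ler0n // ler0c.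
  rewrite derive_poly_logisticL /logistic_dpoly derivX mul1r !hornerE.
  by rewrite !mulr_ge0 ?logistic_ge0 ?subr_ge0 ?logistic_le1.
have := psdmx_block_diag (psdD _ Lu_ge0) (psdD _ Lv_ge0).
by rewrite /causal_block /d_u /d_v !dE commDF_scalar oppr0.
Qed.

Lemma qform_const1 : qform (const_mx 1 : 'cV[C]_2) 1%:M = 2%:R.
Proof.
rewrite /qform mulmx1 !mxE (eq_bigr (fun _ => 1)); last first.
  by move=> j _; rewrite !mxE rmorph1 mulr1.
by rewrite sumr_const card_ord.
Qed.

Lemma logistic_scalar_not_lemx (x y : M) :
  L y < L x -> ~ lemx (logistic_scalar x) (logistic_scalar y).
Proof.
move=> hlt [_ /(_ (const_mx 1))].
rewrite -/(qform _ _) /logistic_scalar -scalerBl -rmorphB qformZ qform_const1.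
rewrite pmulr_lge0 ?ltr0n // ler0c subr_ge0 /poly_logisticL !hornerX ler_logistic.
by rewrite leNgt hlt.
Qed.

End logistic_scalar.

Theorem mainTheorem2 (R : realType) (d1 d2 : R) (x y : 'rV[R]_2) :
  causal_le x y <->
  (forall alpha : 'rV[R]_2 -> 'M[R[i]]_2,
      causal_cone d1 d2 alpha -> lemx (alpha x) (alpha y)).
Proof.
split=> [hxy alpha alpha_cone|cone_le].
  exact: (causal_cone_monotone alpha_cone hxy).
split; rewrite leNgt; apply/negP => hlt.
- have cone_u : causal_cone d1 d2 (logistic_scalar (@lc_u R)).
    apply: (@causal_cone_logistic_scalar R _ (@lc_u_affine R) (@differentiable_lc_u R)).
    - exact: causal_lc_u.
    - by rewrite lc_u_dir_u.
    - by rewrite lc_u_dir_v.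
  exact: logistic_scalar_not_lemx hlt (cone_le _ cone_u).
- have cone_v : causal_cone d1 d2 (logistic_scalar (@lc_v R)).
    apply: (@causal_cone_logistic_scalar R _ (@lc_v_affine R) (@differentiable_lc_v R)).
    - exact: causal_lc_v.
    - by rewrite lc_v_dir_u.
    - by rewrite lc_v_dir_v.
  exact: logistic_scalar_not_lemx hlt (cone_le _ cone_v).
Qed.
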